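(* There exists a $5$-dimensional prismatoid with $24$ vertices, $12$ of them in each of its two base facets, whose width is $6$.
   Context: A polytope is the convex hull of finitely many points in $\mathbb{R}^d$; it is $d$-dimensional if its vertices are not contained in a hyperplane. A prismatoid is a polytope having two parallel facets (its base facets) which together contain all of its vertices. The facet-ridge graph of a $d$-polytope has one node for each facet (face of dimension $d-1$), with two facets adjacent when they share a ridge (face of dimension $d-2$). The width of a prismatoid is the distance between its two base facets in the facet-ridge graph. *)

(* Polytopes given by a finite indexed family of points
   v : 'I_n -> 'rV[R]_d ; faces are described by their vertex sets. *)
From HB Require Import structures.
From mathcomp Require Import all_boot all_order all_algebra.
From mathcomp Require Import Rstruct.
Set Implicit Arguments.
Unset Strict Implicit.
Unset Printing Implicit Defensive.
Import Order.TTheory GRing.Theory Num.Theory.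
Local Open Scope ring_scope.

Section Polytopes.
Variables (R : realFieldType) (d n : nat).
Implicit Types (v : 'I_n -> 'rV[R]_d) (a x : 'rV[R]_d) (W : {set 'I_n}).

Definition dotp a x : R := \sum_(j < d) a 0 j * x 0 j.

Definition in_conv_hull v (S : {set 'I_n}) x : Prop :=
  exists lam : 'I_n -> R,
    [/\ forall j, 0 <= lam j,
        forall j, j \notin S -> lam j = 0,
        \sum_(j < n) lam j = 1 &
        \sum_(j < n) lam j *: v j = x].

(* every v i is a vertex of conv(v): it is not in the convex hull of the others;
   so conv(v) has exactly n (distinct) vertices, namely the v i *)
Definition all_vertices v : Prop :=
  forall i, ~ in_conv_hull v (~: [set i]) (v i).

Definition full_dim v : Prop :=
  ~ exists a (b : R), a != 0 /\ forall i, dotp a (v i) = b.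

Definition is_face v W : Prop :=
  W != set0 /\
  exists a (b : R), (forall i, dotp a (v i) <= b) /\
                    (forall i, (i \in W) <-> dotp a (v i) = b).

(* the points v i, i in W, have affine dimension k
   (rank of the homogenized coordinate matrix equals k+1) *)
Definition aff_dim v W (k : nat) : Prop :=
  \rank (\matrix_(i < n) (if i \in W then row_mx (v i) (1 : 'rV[R]_1)
                          else 0)) = k.+1.

Definition is_facet v W : Prop := is_face v W /\ aff_dim v W d.-1.
Definition is_ridge v W : Prop := is_face v W /\ aff_dim v W d.-2.

Definition fr_adj v F G : Prop :=
  [/\ is_facet v F, is_facet v G, F != G &
      exists Rg, is_ridge v Rg /\ Rg \subset F :&: G].

Fixpoint fr_walk v (k : nat) F G : Prop :=
  match k with
  | 0 => F = G /\ is_facet v F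
  | k'.+1 => exists H, fr_adj v F H /\ fr_walk v k' H G
  end.

Definition fr_dist v F G (k : nat) : Prop :=
  fr_walk v k F G /\ forall m, (m < k)%N -> ~ fr_walk v m F G.

Definition prismatoid_bases v F1 F2 : Prop :=
  [/\ is_facet v F1, is_facet v F2, F1 != F2,
      F1 :|: F2 = setT &
      exists a (b1 b2 : R), a != 0 /\
        (forall i, i \in F1 -> dotp a (v i) = b1) /\
        (forall i, i \in F2 -> dotp a (v i) = b2)].

End Polytopes.

(* The polytope has integer coordinates, so every claim reduces to a finite
   computation.  A facet contains d affinely independent vertices, and its
   hyperplane is the only one through them: computing, for each d-subset of
   vertices, the normal of the hyperplane it spans (as an exterior product of
   homogenised points) and keeping the supporting ones lists every facet.
   A vertex is cut off by the sum of the normals of the facets through it;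
   facets and ridges along an explicit path are certified by a supporting
   normal and a rank certificate.  Finally, a walk of length m ending at F2
   stays in the ball of radius m around F2 in the graph of listed facets
   sharing at least d - 1 vertices; breadth-first search shows that F1 is
   outside the ball of radius 5, and descending through the balls gives a
   walk of length 6. *)

From Stdlib Require Import ZArith.
From HB Require Import structures.
From mathcomp Require Import all_boot all_order all_algebra.
From mathcomp Require Import ssrZ zify Rstruct.
From Stdlib Require Rdefinitions.
Set Implicit Arguments.
Unset Strict Implicit.
Unset Printing Implicit Defensive.
Import Order.TTheory GRing.Theory Num.Theory.

Section RestrictRows.
Variable F : fieldType.
Local Open Scope ring_scope.

Definition restrict_rows m n (W : {set 'I_m}) (A : 'M[F]_(m, n)) : 'M[F]_(m, n) :=
  \matrix_(i < m) (if i \in W then row i A else 0).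

Lemma row_restrict_rows m n (W : {set 'I_m}) (A : 'M[F]_(m, n)) i :
  row i (restrict_rows W A) = if i \in W then row i A else 0.
Proof. by rewrite rowK. Qed.

Lemma restrict_rowsT m n (A : 'M[F]_(m, n)) : restrict_rows setT A = A.
Proof. by apply/row_matrixP => i; rewrite row_restrict_rows in_setT. Qed.

Lemma restrict_rows_sub m n (W : {set 'I_m}) (A : 'M[F]_(m, n)) :
  (restrict_rows W A <= A)%MS.
Proof.
apply/row_subP => i; rewrite row_restrict_rows.
by case: ifP => _; [exact: row_sub | exact: sub0mx].
Qed.

Lemma rank_restrict_rows_le m n (W : {set 'I_m}) (A : 'M[F]_(m, n)) :
  (\rank (restrict_rows W A) <= #|W|)%N.
Proof.
pose B := \matrix_(k < #|W|) row (enum_val k) A.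
have sub : (restrict_rows W A <= B)%MS.
  apply/row_subP => i; rewrite row_restrict_rows; case: ifP => Wi; last exact: sub0mx.
  by apply: (eq_row_sub (enum_rank_in Wi i)); rewrite rowK enum_rankK_in.
exact: leq_trans (mxrankS sub) (rank_leq_row B).
Qed.

Lemma restrict_rows_rank_subset m n (W : {set 'I_m}) (A : 'M[F]_(m, n)) :
  exists2 S : {set 'I_m}, S \subset W &
    #|S| = \rank (restrict_rows W A) /\ \rank (restrict_rows S A) = \rank (restrict_rows W A).
Proof.
set B := restrict_rows W A; pose f := maxrankfun B.
have f_inj : injective f := @maxrankfun_inj _ _ _ B.
have inW x : f x \in W.
  have := maxrowsub_free B; apply: contraTT => fxW.
  by apply/row_freePn; exists x; rewrite row_rowsub row_restrict_rows (negbTE fxW) sub0mx.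
set S := [set f x | x : 'I_(\rank B)].
have cardS : #|S| = \rank B by rewrite card_imset ?card_ord.
exists S; first by apply/subsetP => y /imsetP[x _ ->].
split=> //; apply/eqP; rewrite eqn_leq -{1}cardS rank_restrict_rows_le /=.
have rowsubS : rowsub f B = rowsub f (restrict_rows S A).
  by apply/row_matrixP => x; rewrite !row_rowsub !row_restrict_rows inW imset_f.
by rewrite -{1}(eq_maxrowsub B) rowsubS mxrankS ?rowsub_sub.
Qed.

Lemma mxrank_lt_ker m n (A : 'M[F]_(m, n)) (u : 'cV[F]_n) :
  u != 0 -> A *m u = 0 -> (\rank A < n)%N.
Proof.
move=> u0 Au; rewrite ltn_neqAle rank_leq_col andbT.
apply: contra u0 => /eqP full; have /row_fullP[B BA] : row_full A by rewrite /row_full full.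
by rewrite -[u]mul1mx -BA -mulmxA Au mulmx0.
Qed.

Lemma mxrank_ge_diag m n k (A : 'M[F]_(m, n)) (r : 'I_k -> 'I_m)
    (X : 'M[F]_(n, k)) (delta : 'rV[F]_k) :
  (forall q, delta 0 q != 0) -> rowsub r A *m X = diag_mx delta -> (k <= \rank A)%N.
Proof.
move=> delta0 AX.
have unitD : diag_mx delta \in unitmx.
  by rewrite unitmxE det_diag unitfE; apply/prodf_neq0 => q _.
rewrite -(mxrank_unit unitD) -AX.
exact: leq_trans (mxrankM_maxl _ _) (mxrankS (rowsub_sub _ _)).
Qed.

Lemma corank1_ker_colinear m n (A : 'M[F]_(m, n)) (h c : 'cV[F]_n) :
  (\rank A).+1 = n -> A *m h = 0 -> A *m c = 0 -> c != 0 -> exists l, h = l *: c.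
Proof.
move=> rkA Ah Ac c0.
pose N := col_mx h^T c^T.
have NK : (N <= kermx A^T)%MS.
  by apply/sub_kermxP; rewrite mul_col_mx -!trmx_mul Ah Ac trmx0 col_mx0.
have rN : (\rank N <= 1)%N.
  apply: leq_trans (mxrankS NK) _.
  by rewrite mxrank_ker mxrank_tr -[X in (X - _)%N]rkA subSnn.
have cN : (c^T <= N)%MS by rewrite -addsmxE addsmxSr.
have rc : \rank c^T = 1%N.
  apply/eqP; rewrite eqn_leq rank_leq_row lt0n mxrank_eq0.
  by apply: contra c0 => /eqP/(congr1 trmx); rewrite trmxK trmx0 => ->.
have eqc : (c^T == N)%MS.
  by case: (mxrank_leqif_eq cN) => _ <-; rewrite eqn_leq (mxrankS cN) rc rN.
have /sub_rVP[l hl] : (h^T <= c^T)%MS by rewrite (eqmxP eqc) -addsmxE addsmxSl.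
by exists l; apply: (can_inj (@trmxK _ _ _)); rewrite hl linearZ.
Qed.

End RestrictRows.

Section IndexLists.
Variable n : nat.
Implicit Types (W V : {set 'I_n}) (s : seq nat).

Definition vseq W : seq nat := [seq val i | i <- enum W].
Definition vset s : {set 'I_n} := [set i | val i \in s].

Lemma mem_vseq W (i : 'I_n) : (val i \in vseq W) = (i \in W).
Proof. by rewrite (mem_map val_inj) mem_enum. Qed.

Lemma vseqE W (P : pred nat) : (forall i : 'I_n, (i \in W) = P i) ->
  vseq W = [seq i <- iota 0 n | P i].
Proof.
move=> WP; rewrite -val_enum_ord enumT filter_map /vseq /enum_mem.
by congr map; apply: eq_filter => i; exact: WP.
Qed.

Lemma size_vseq W : size (vseq W) = #|W|.
Proof. by rewrite size_map cardE. Qed.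

Lemma subseq_vseq W : subseq (vseq W) (iota 0 n).
Proof.
rewrite (vseqE (P := fun i : nat => i \in vseq W)) ?filter_subseq // => i.
by rewrite mem_vseq.
Qed.

Lemma count_vseq W V : count (mem (vseq V)) (vseq W) = #|W :&: V|.
Proof.
have vseqW : vseq W = [seq i <- iota 0 n | i \in vseq W].
  by apply: vseqE => i; rewrite mem_vseq.
rewrite vseqW count_filter -size_filter -size_vseq; congr size; apply/esym/vseqE => i.
by rewrite inE /= !mem_vseq andbC.
Qed.

End IndexLists.

Section PolytopeFacts.
Variables (R : realFieldType) (d n : nat) (v : 'I_n -> 'rV[R]_d).
Implicit Types (W F : {set 'I_n}) (a : 'rV[R]_d) (b : R).
Local Open Scope ring_scope.

Definition hmx : 'M[R]_(n, d + 1) := \matrix_(i < n) row_mx (v i) (1 : 'rV[R]_1).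

Definition hyp_col a b : 'cV[R]_(d + 1) := col_mx a^T (- b)%:M.

Lemma aff_dimE W k : aff_dim v W k <-> \rank (restrict_rows W hmx) = k.+1.
Proof.
rewrite /aff_dim; suff -> : \matrix_(i < n) (if i \in W then row_mx (v i) 1 else 0) =
  restrict_rows W hmx by [].
by apply/row_matrixP => i; rewrite row_restrict_rows !rowK.
Qed.

Lemma restrict_hmx_hyp W a b i :
  (restrict_rows W hmx *m hyp_col a b) i 0 = if i \in W then dotp a (v i) - b else 0.
Proof.
have -> : (restrict_rows W hmx *m hyp_col a b) i 0 =
          row i (restrict_rows W hmx *m hyp_col a b) 0 0 by rewrite [RHS]mxE.
rewrite row_mul row_restrict_rows; case: ifP => _; last by rewrite mul0mx mxE.
rewrite rowK mul_row_col mul1mx !mxE eqxx mulr1n; congr (_ - _).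
by apply: eq_bigr => j _; rewrite !mxE mulrC.
Qed.

Lemma hyp_col_eq0 a b : (hyp_col a b == 0) = (a == 0) && (b == 0).
Proof.
rewrite col_mx_eq0 trmx_eq0; congr andb; apply/eqP/eqP => [/matrixP/(_ 0 0)|->].
  by rewrite !mxE mulr1n => /eqP; rewrite oppr_eq0 => /eqP.
by apply/matrixP => x y; rewrite !mxE oppr0 mul0rn.
Qed.

Lemma aff_dim_card W k : aff_dim v W k -> (k < #|W|)%N.
Proof. by move/aff_dimE => rk; have := rank_restrict_rows_le W hmx; rewrite rk. Qed.

Lemma face_ker W a b : (forall i, (i \in W) <-> dotp a (v i) = b) ->
  restrict_rows W hmx *m hyp_col a b = 0.
Proof.
move=> Wab; apply/matrixP => i j; rewrite ord1 restrict_hmx_hyp mxE.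
by case: ifP => // /Wab ->; rewrite subrr.
Qed.

(* Otherwise the rows of [F] would span those of [hmx], and the inequality
   defining [F] would be tight at every vertex. *)
Lemma proper_facet_rank F : (0 < d)%N -> is_facet v F -> F != setT ->
  \rank hmx = (d + 1)%N.
Proof.
move=> d_gt0 [[_ [a [b [_ Fab]]]] /aff_dimE]; rewrite prednK // => rkF FT.
apply/eqP; rewrite eqn_leq rank_leq_col [X in (X <= _)%N]addn1 ltnNge.
apply: contra FT => rk_le.
have sub := restrict_rows_sub F hmx.
have /submxP[D hmxD] : (hmx <= restrict_rows F hmx)%MS.
  have rk_ge : (d <= \rank hmx)%N by rewrite -[X in (X <= _)%N]rkF mxrankS.
  by rewrite -(mxrank_leqif_sup sub).2 rkF eqn_leq rk_le rk_ge.
apply/eqP/setP => i; rewrite in_setT; apply/Fab/eqP; rewrite -subr_eq0.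
have := restrict_hmx_hyp setT a b i.
by rewrite restrict_rowsT in_setT hmxD -mulmxA face_ker // mulmx0 mxE => <-.
Qed.

Lemma full_dim_of_rank : \rank hmx = (d + 1)%N -> full_dim v.
Proof.
move=> rk [a [b [a0 ab]]].
have ker : hmx *m hyp_col a b = 0.
  apply/matrixP => i j; rewrite ord1 -(restrict_rowsT hmx) restrict_hmx_hyp in_setT.
  by rewrite ab subrr mxE.
have u0 : hyp_col a b != 0 by rewrite hyp_col_eq0 (negbTE a0).
by have := mxrank_lt_ker u0 ker; rewrite rk ltnn.
Qed.

Lemma dotp_sum a (lam : 'I_n -> R) :
  dotp a (\sum_(j < n) lam j *: v j) = \sum_(j < n) lam j * dotp a (v j).
Proof.
rewrite /dotp; under eq_bigr do rewrite summxE big_distrr /=.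
rewrite exchange_big; apply: eq_bigr => j _; rewrite big_distrr; apply: eq_bigr => k _.
by rewrite mxE mulrCA.
Qed.

Lemma not_in_conv_hull_sep i a b : dotp a (v i) = b ->
  (forall j, j != i -> dotp a (v j) < b) -> ~ in_conv_hull v (~: [set i]) (v i).
Proof.
move=> ai aj [lam [lam_ge0 lam_out lam_sum lam_v]].
have lam_i : lam i = 0 by rewrite lam_out // !inE eqxx.
have gap_sum : \sum_(j < n) lam j * (b - dotp a (v j)) = 0.
  under eq_bigr do rewrite mulrBr.
  by rewrite sumrB -mulr_suml lam_sum mul1r -dotp_sum lam_v ai subrr.
have gap_ge0 j : 0 <= lam j * (b - dotp a (v j)).
  have [->|ji] := eqVneq j i; first by rewrite lam_i mul0r.
  by rewrite mulr_ge0 // subr_ge0 ltW ?aj.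
have lam0 j : lam j = 0.
  have [->//|ji] := eqVneq j i.
  have /(_ j isT)/eqP := psumr_eq0P (fun j _ => gap_ge0 j) gap_sum.
  by rewrite mulf_eq0 subr_eq0 (gt_eqF (aj j ji)) orbF => /eqP.
by move: lam_sum; rewrite big1 // => /esym/eqP; rewrite oner_eq0.
Qed.

Lemma fr_walk_of_chain (P : nat -> {set 'I_n}) m :
  (forall k, (k < m)%N -> fr_adj v (P k) (P k.+1)) -> is_facet v (P m) ->
  fr_walk v m (P 0%N) (P m).
Proof.
elim: m P => [|m IHm] P adjP facetP /=; first by split.
exists (P 1%N); split; first exact: adjP.
by apply: (IHm (fun k => P k.+1)) => // k km; apply: adjP.
Qed.

End PolytopeFacts.

Section SubsetCollect.
Variables (A : Type) (T : eqType) (step : A -> nat -> A) (out : A -> option T).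

Fixpoint collect_subsets (k : nat) (s : seq nat) (a : A) : seq T :=
  match k with
  | 0 => if out a is Some x then [:: x] else [::]
  | k'.+1 =>
    (fix loop s := if s is i :: s' then collect_subsets k' s' (step a i) ++ loop s' else [::]) s
  end.

Lemma mem_collect_subsets k s a t x : subseq t s -> size t = k ->
  out (foldl step a t) = Some x -> x \in collect_subsets k s a.
Proof.
elim: k s a t => [|k IHk] s a [|i t] //=; first by move=> _ _ ->; rewrite mem_seq1.
move=> + [size_t]; elim: s => [|j s IHs] //= sub outx; rewrite mem_cat.
case: eqP sub => [<- | _] sub; first by rewrite (IHk s (step a i) t).
by rewrite IHs ?orbT.
Qed.

End SubsetCollect.

Section IntegerComputations.
Local Open Scope Z_scope.

Fixpoint zdot (c x : seq Z) : Z :=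
  match c, x with
  | a :: c', b :: x' => a * b + zdot c' x'
  | _, _ => 0
  end.

Definition zopp (c : seq Z) : seq Z := map Z.opp c.
Definition zadd (c c' : seq Z) : seq Z := [seq p.1 + p.2 | p <- zip c c'].
Definition zunit (m j : nat) : seq Z := [seq if k == j then 1 else 0 | k <- iota 0 m].

Lemma zdot_opp c x : zdot (zopp c) x = - zdot c x.
Proof. by elim: c x => [|a c IHc] [|b x] //=; rewrite IHc; lia. Qed.

(* The exterior algebra of Z^m, coordinatised recursively: [ExtN w w'] stands
   for [e_0 /\ w + w'], where [w] and [w'] only involve [e_1, ..., e_(m-1)],
   and [ExtS a] for the scalar [a]. *)
Inductive ext := Ext0 | ExtS of Z | ExtN of ext & ext.

Fixpoint ext_of_vec (x : seq Z) : ext :=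
  if x is a :: x' then ExtN (ExtS a) (ext_of_vec x') else Ext0.

Fixpoint ext_scale (a : Z) (w : ext) : ext :=
  match w with
  | Ext0 => Ext0
  | ExtS b => ExtS (a * b)
  | ExtN w1 w2 => ExtN (ext_scale a w1) (ext_scale a w2)
  end.

Fixpoint ext_add (w w' : ext) : ext :=
  match w, w' with
  | Ext0, _ => w'
  | _, Ext0 => w
  | ExtS a, ExtS b => ExtS (a + b)
  | ExtN w1 w2, ExtN w1' w2' => ExtN (ext_add w1 w1') (ext_add w2 w2')
  | _, _ => w
  end.

(* [ext_wedge k w x] is [w /\ x] for [w] of degree [k], by
   [(e_0 /\ w1 + w2) /\ (a e_0 + x') = e_0 /\ (w1 /\ x' + (-1)^k a w2) + w2 /\ x']. *)
Fixpoint ext_wedge (k : nat) (w : ext) (x : seq Z) : ext :=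
  match w, x with
  | Ext0, _ | ExtN _ _, [::] => Ext0
  | ExtS a, _ => ext_scale a (ext_of_vec x)
  | ExtN w1 w2, a :: x' =>
    ExtN (ext_add (ext_wedge k.-1 w1 x') (ext_scale (if odd k then - a else a) w2))
         (ext_wedge k w2 x')
  end.

(* The coefficient of [e_J], for [J] given by its indicator. *)
Fixpoint ext_coef (w : ext) (J : seq bool) : Z :=
  match w, J with
  | ExtN w1 _, true :: J' => ext_coef w1 J'
  | ExtN _ w2, false :: J' => ext_coef w2 J'
  | ExtS a, _ => if has id J then 0 else a
  | _, _ => 0
  end.

Definition ext_blade (rows : seq (seq Z)) : ext :=
  (foldl (fun kw x => (kw.1.+1, ext_wedge kw.1 kw.2 x)) (0%N, ExtS 1) rows).2.

Definition rem_nth (T : Type) (q : nat) (s : seq T) : seq T := take q s ++ drop q.+1 s.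

Section Certificates.
Variables (d : nat) (X : seq (seq Z)).

(* For a [d]-vector [w] of [Z^(d+1)], the vector [c] such that [zdot c y] is
   the coefficient of [w /\ y]: [c_j] is the coefficient of [e_([0, d] \ j)],
   with the sign of moving [e_j] past [e_(j+1), ..., e_d]. *)
Definition ext_normal (w : ext) : seq Z :=
  [seq let a := ext_coef w [seq k != j | k <- iota 0 d.+1] in
       if odd (d - j) then - a else a | j <- iota 0 d.+1].

Definition zhom (i : nat) : seq Z := rcons (nth [::] X i) 1.

Definition zero_set (c : seq Z) : seq nat :=
  [seq i <- iota 0 (size X) | zdot c (zhom i) == 0].

Definition valid_ineq (c : seq Z) : bool :=
  all (fun i => zdot c (zhom i) <=? 0) (iota 0 (size X)).

Definition span_step (acc : seq nat * ext) (i : nat) : seq nat * ext :=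
  (i :: acc.1, ext_wedge (size acc.1) acc.2 (zhom i)).

(* [Some [::]] flags a [d]-subset whose computed normal is unusable. *)
Definition facet_candidate (acc : seq nat * ext) : option (seq nat) :=
  let c := ext_normal acc.2 in
  if has (fun z => z != 0) c && all (fun i => zdot c (zhom i) == 0) acc.1 then
    if valid_ineq c || valid_ineq (zopp c) then Some (zero_set c) else None
  else Some [::].

Definition facet_list : seq (seq nat) :=
  undup (collect_subsets span_step facet_candidate d (iota 0 (size X)) ([::], ExtS 1)).

Definition facet_normal (s : seq nat) : seq Z :=
  let c := ext_normal (ext_blade [seq zhom i | i <- take d s]) in
  if valid_ineq c then c else zopp c.

(* Column [q] is orthogonal to every row but row [q]: these are cofactors of a
   completion of the rows by unit vectors to an invertible matrix. *)
Definition dual_basis (rows : seq nat) : seq (seq Z) :=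
  let M := [seq zhom i | i <- rows] in
  let pads := collect_subsets (fun J j => j :: J) Some (d.+1 - size rows) (iota 0 d.+1) [::] in
  let J := head [::] [seq J <- pads | ext_coef (ext_blade (M ++ map (zunit d.+1) J))
                                               (nseq d.+1 true) != 0] in
  [seq ext_normal (ext_blade (rem_nth q (M ++ map (zunit d.+1) J))) | q <- iota 0 (size rows)].

Definition rank_cert (rows : seq nat) : bool :=
  let Y := dual_basis rows in
  all (fun p => all (fun q => (zdot (nth [::] Y q) (zhom (nth 0%N rows p)) == 0) == (p != q))
                    (iota 0 (size rows)))
      (iota 0 (size rows)).

Definition facet_cert (s : seq nat) : bool :=
  let c := facet_normal s in
  [&& valid_ineq c, zero_set c == s, s != [::], has (fun z => z != 0) c &
      (size (take d s) == d) && rank_cert (take d s)].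

Definition ridge_cert (s u : seq nat) : bool :=
  let r := [seq i <- s | i \in u] in
  let c := zadd (facet_normal s) (facet_normal u) in
  [&& valid_ineq c, zero_set c == r, r != [::], size r == d.-1 & rank_cert r].

Definition adjacent_cert (s u : seq nat) : bool :=
  [&& facet_cert s, facet_cert u, s != u & ridge_cert s u].

Definition vertex_separator (F : seq (seq nat)) (i : nat) : seq Z :=
  foldr zadd (nseq d.+1 0) [seq facet_normal s | s <- F & i \in s].

Definition separated (F : seq (seq nat)) : bool :=
  all (fun i => let c := vertex_separator F i in
         all (fun j => if j == i then zdot c (zhom j) == 0 else zdot c (zhom j) <? 0)
             (iota 0 (size X)))
      (iota 0 (size X)).

Definition adjacent (s u : seq nat) : bool := (d.-1 <= count (mem u) s)%N.

Definition grow (F B : seq (seq nat)) : seq (seq nat) :=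
  B ++ [seq s <- F | (s \notin B) && has (adjacent s) B].

Fixpoint descent (Bs : seq (seq (seq nat))) (s : seq nat) : seq (seq nat) :=
  if Bs is B :: Bs' then
    let u := head [::] [seq u <- B | adjacent s u] in u :: descent Bs' u
  else [::].

Definition width_cert (F : seq (seq nat)) (s1 s2 : seq nat) (k : nat) : bool :=
  let p := descent (rev (traject (grow F) [:: s2] k)) s1 in
  [&& s1 \notin iter k.-1 (grow F) [:: s2], path adjacent_cert s1 p & last s1 p == s2].

Definition parallel_cert (s1 s2 : seq nat) : bool :=
  let c := facet_normal s1 in
  has (fun z => z != 0) (take d c) && constant [seq zdot c (zhom i) | i <- s2].

Definition prismatoid_cert (s1 s2 : seq nat) : bool :=
  [&& facet_cert s1, facet_cert s2, s1 != s2,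
      all (fun i => (i \in s1) || (i \in s2)) (iota 0 (size X)) & parallel_cert s1 s2].

Lemma size_ext_normal w : size (ext_normal w) = d.+1.
Proof. by rewrite size_map size_iota. Qed.

Lemma size_facet_normal s : size (facet_normal s) = d.+1.
Proof. by rewrite /facet_normal; case: ifP; rewrite ?size_map size_iota. Qed.

Lemma span_step_indices acc t : (foldl span_step acc t).1 = catrev t acc.1.
Proof. by elim: t acc => //= i t IHt acc; rewrite IHt. Qed.

Lemma size_descent Bs s : size (descent Bs s) = size Bs.
Proof. by elim: Bs s => //= B Bs IHBs s; rewrite IHBs. Qed.

Lemma iter_grow_mono F B m m' : (m <= m')%N ->
  {subset iter m (grow F) B <= iter m' (grow F) B}.
Proof.
move=> /subnK <-; elim: (m' - m)%N => // k IHk s /IHk sB.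
by rewrite addSn /= /grow mem_cat sB.
Qed.

End Certificates.
End IntegerComputations.

Section IntegerPolytope.
Variables (R : realFieldType) (d n : nat) (X : seq (seq Z)).
Hypotheses (size_X : size X = n) (shape_X : all (fun x => size x == d) X).
Local Open Scope ring_scope.

Definition zR (z : Z) : R := (int_of_Z z)%:~R.

Definition zpoint (i : 'I_n) : 'rV[R]_d := \row_(j < d) zR (nth 0 (nth [::] X i) j).
Local Notation v := zpoint.

Definition zrow (c : seq Z) : 'rV[R]_d := \row_(j < d) zR (nth 0 c j).
Definition zhyp (c : seq Z) : 'cV[R]_(d + 1) := \col_(j < d + 1) zR (nth 0 c j).

Lemma zR0 : zR 0 = 0.
Proof. by rewrite /zR rmorph0. Qed.

Lemma zRD a b : zR (a + b) = zR a + zR b.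
Proof. by rewrite /zR rmorphD intrD. Qed.

Lemma zRM a b : zR (a * b) = zR a * zR b.
Proof. by rewrite /zR rmorphM intrM. Qed.

Lemma zRN a : zR (Z.opp a) = - zR a.
Proof. by rewrite /zR -intrN -rmorphN. Qed.

Lemma zR_le a b : (zR a <= zR b) = Z.leb a b.
Proof. by rewrite /zR ler_int; apply/idP/idP; lia. Qed.

Lemma zR_lt a b : (zR a < zR b) = Z.ltb a b.
Proof. by rewrite /zR ltr_int; apply/idP/idP; lia. Qed.

Lemma zR_eq0 a : (zR a == 0) = (a == 0).
Proof. by rewrite /zR intr_eq0; apply/eqP/eqP; lia. Qed.

Lemma zdotE c x : zdot c x = \sum_(j < size x) c`_j * x`_j.
Proof.
elim: x c => [|b x IHx] [|a c] /=; rewrite ?big_ord0 // big_ord_recl.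
  by rewrite big1 ?mul0r ?addr0 // => j _; rewrite nth_nil mul0r.
by rewrite IHx.
Qed.

Lemma zR_zdot c x : zR (zdot c x) = \sum_(j < size x) zR c`_j * zR x`_j.
Proof.
rewrite zdotE (big_morph zR zRD zR0).
by apply: eq_bigr => j _; rewrite zRM.
Qed.

Lemma size_point (i : 'I_n) : size (nth [::] X i) = d.
Proof. by apply/eqP; apply: (all_nthP [::] shape_X); rewrite size_X. Qed.

Lemma zR_zdot_hom c (i : 'I_n) :
  zR (zdot c (zhom X i)) = dotp (zrow c) (v i) + zR (nth 0 c d).
Proof.
rewrite zR_zdot size_rcons size_point big_ord_recr /= nth_rcons size_point ltnn eqxx.
rewrite /zR rmorph1 mulr1; congr (_ + _); apply: eq_bigr => j _.
by rewrite nth_rcons size_point ltn_ord !mxE.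
Qed.

Lemma zhypE c : zhyp c = hyp_col (zrow c) (- zR (nth 0 c d)).
Proof.
apply/colP => j; rewrite !mxE; case: splitP => k jk; rewrite !mxE jk //.
by rewrite ord1 addn0 opprK mulr1n.
Qed.

Lemma restrict_hmx_zhyp W c i :
  (restrict_rows W (hmx v) *m zhyp c) i 0 = if i \in W then zR (zdot c (zhom X i)) else 0.
Proof. by rewrite zhypE restrict_hmx_hyp zR_zdot_hom opprK. Qed.

Lemma zhyp_neq0 c : size c = d.+1 -> has (fun z => z != 0) c -> zhyp c != 0.
Proof.
move=> size_c /(has_nthP 0) [j]; rewrite size_c -[d.+1]addn1 => jd cj.
apply/eqP => /matrixP/(_ (Ordinal jd) 0).
by rewrite !mxE => /eqP; rewrite zR_eq0 (negbTE cj).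
Qed.

Lemma valid_ineqP c :
  reflect (forall i : 'I_n, zR (zdot c (zhom X i)) <= 0) (valid_ineq X c).
Proof.
apply: (iffP allP) => [valid i | valid i].
  by have := valid i; rewrite mem_iota size_X ltn_ord -(zR_le _ 0) zR0; apply.
rewrite mem_iota size_X => /andP[_ ilt].
by rewrite -(zR_le _ 0) zR0; exact: (valid (Ordinal ilt)).
Qed.

Lemma mem_zero_set c (i : 'I_n) : (val i \in zero_set X c) = (zdot c (zhom X i) == 0).
Proof. by rewrite mem_filter mem_iota /= size_X ltn_ord andbT. Qed.

Lemma vseq_vset_zero_set c : vseq (vset n (zero_set X c)) = zero_set X c.
Proof. by rewrite {2}/zero_set size_X; apply: vseqE => i; rewrite inE mem_zero_set. Qed.

Lemma face_of_ineq c : valid_ineq X c -> zero_set X c != [::] ->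
  is_face v (vset n (zero_set X c)).
Proof.
move=> /valid_ineqP valid nz; split.
  have [i izs] : exists i, i \in zero_set X c.
    by case: (zero_set X c) nz => // i s _; exists i; rewrite mem_head.
  have ilt : (i < n)%N.
    by move: izs; rewrite mem_filter mem_iota size_X => /andP[_ /andP[]].
  by apply/set0Pn; exists (Ordinal ilt); rewrite inE.
exists (zrow c), (- zR (nth 0 c d)); split => i.
  by rewrite -subr_le0 opprK -zR_zdot_hom valid.
by rewrite inE mem_zero_set -zR_eq0 zR_zdot_hom addr_eq0; split => /eqP.
Qed.

Lemma rank_of_cert W rows : {subset rows <= vseq W} -> rank_cert d X rows ->
  (size rows <= \rank (restrict_rows W (hmx v)))%N.
Proof.
case: rows => [//|r0 rows'] sub /allP cert; set rows := r0 :: rows' in sub cert *.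
have /mapP[i0 _ _] := sub r0 (mem_head _ _).
set Y := dual_basis d X rows in cert.
pose r (p : 'I_(size rows)) : 'I_n := insubd i0 (nth 0%N rows p).
have rP p : val (r p) = nth 0%N rows p /\ r p \in W.
  have /mapP[i] : nth 0%N rows p \in vseq W by apply/sub/mem_nth.
  by rewrite mem_enum => iW rows_p; rewrite /r rows_p valKd.
pose Xm := \matrix_(j < d + 1, q < size rows) zhyp (nth [::] Y q) j 0.
pose delta := \row_(q < size rows) zR (zdot (nth [::] Y q) (zhom X (nth 0%N rows q))).
have cert_pq (p q : 'I_(size rows)) :
    (zdot (nth [::] Y q) (zhom X (nth 0%N rows p)) == 0) = (p != q).
  have := cert p; rewrite mem_iota ltn_ord => /(_ isT)/allP/(_ q).
  by rewrite mem_iota ltn_ord => /(_ isT)/eqP.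
apply: (mxrank_ge_diag (r := r) (X := Xm) (delta := delta)).
  by move=> q; rewrite mxE zR_eq0 cert_pq eqxx.
apply/matrixP => p q.
have -> : (rowsub r (restrict_rows W (hmx v)) *m Xm) p q =
          (restrict_rows W (hmx v) *m zhyp (nth [::] Y q)) (r p) 0.
  by rewrite !mxE; apply: eq_bigr => j _; rewrite !mxE.
rewrite restrict_hmx_zhyp (rP p).2 (rP p).1 !mxE.
have [<- | pq] := eqVneq p q; first by rewrite mulr1n.
by rewrite mulr0n; apply/eqP; rewrite zR_eq0 cert_pq.
Qed.

Lemma vseq_facet s : facet_cert d X s -> vseq (vset n s) = s.
Proof. by case/and5P => _ /eqP <- *; exact: vseq_vset_zero_set. Qed.

Lemma eq_vset_facet s u : facet_cert d X s -> facet_cert d X u ->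
  (vset n s == vset n u) = (s == u).
Proof.
move=> fs fu; apply/eqP/eqP => [su | -> //].
by rewrite -(vseq_facet fs) -(vseq_facet fu) su.
Qed.

Lemma tight_ineq_multiple S a b c :
  \rank (restrict_rows S (hmx v)) = d -> (forall i, i \in S -> dotp a (v i) = b) ->
  zhyp c != 0 -> (forall i, i \in S -> zdot c (zhom X i) = 0) ->
  exists l, forall i, dotp a (v i) - b = l * zR (zdot c (zhom X i)).
Proof.
move=> rkS Sab c0 Sc.
have ker_ab : restrict_rows S (hmx v) *m hyp_col a b = 0.
  apply/matrixP => i j; rewrite ord1 restrict_hmx_hyp mxE.
  by case: ifP => // /Sab ->; rewrite subrr.
have ker_c : restrict_rows S (hmx v) *m zhyp c = 0.
  apply/matrixP => i j; rewrite ord1 restrict_hmx_zhyp mxE.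
  by case: ifP => // /Sc ->; rewrite zR0.
have [|l abc] := corank1_ker_colinear _ ker_ab ker_c c0; first by rewrite rkS addn1.
exists l => i; have := restrict_hmx_hyp v setT a b i.
by rewrite abc -scalemxAr mxE restrict_hmx_zhyp !in_setT => <-.
Qed.

Lemma face_of_scaled_ineq (W : {set 'I_n}) a b c l :
  (forall i, dotp a (v i) <= b) -> (forall i, (i \in W) <-> dotp a (v i) = b) -> l != 0 ->
  (forall i, dotp a (v i) - b = l * zR (zdot c (zhom X i))) ->
  (valid_ineq X c || valid_ineq X (zopp c)) /\ zero_set X c = vseq W.
Proof.
move=> ab Wab l0 key; split.
  have [l_lt0 | l_gt0 | l_eq0] := ltgtP l 0; last by rewrite l_eq0 eqxx in l0.
    apply/orP; right; apply/valid_ineqP => i; rewrite zdot_opp zRN oppr_le0.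
    by have := ab i; rewrite -subr_le0 key nmulr_rle0.
  apply/orP; left; apply/valid_ineqP => i.
  by have := ab i; rewrite -subr_le0 key pmulr_rle0.
rewrite /zero_set size_X; apply/esym/vseqE => i.
apply/idP/idP => [/Wab/eqP | /eqP dot0].
  by rewrite -subr_eq0 key mulf_eq0 (negbTE l0) zR_eq0.
by apply/Wab/eqP; rewrite -subr_eq0 key dot0 zR0 mulr0.
Qed.

Hypothesis d_gt1 : (1 < d)%N.

Lemma facet_of_cert s : facet_cert d X s -> is_facet v (vset n s).
Proof.
move=> cert; have vseq_s := vseq_facet cert.
case/and5P: cert => valid /eqP zs s0 nz /andP[/eqP size_rows rank_rows].
set c := facet_normal d X s in valid zs nz.
split; first by rewrite -zs; apply: face_of_ineq; rewrite ?zs.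
apply/aff_dimE; rewrite prednK ?(ltnW d_gt1) //; apply/eqP; rewrite eqn_leq.
apply/andP; split.
  have ker : restrict_rows (vset n s) (hmx v) *m zhyp c = 0.
    apply/matrixP => i j; rewrite ord1 restrict_hmx_zhyp inE -zs mem_zero_set mxE.
    by case: ifP => // /eqP ->; rewrite zR0.
  have c0 : zhyp c != 0 by rewrite zhyp_neq0 ?size_facet_normal.
  by have := mxrank_lt_ker c0 ker; rewrite [X in (_ < X)%N]addn1 ltnS.
rewrite -{1}size_rows rank_of_cert // => i; rewrite vseq_s; exact: mem_take.
Qed.

Lemma ridge_of_cert s u : ridge_cert d X s u -> is_ridge v (vset n [seq i <- s | i \in u]).
Proof.
case/and5P => valid /eqP zr r0 /eqP size_r rank_r.
set r := [seq i <- s | i \in u] in zr r0 size_r rank_r *.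
split; first by rewrite -zr; apply: face_of_ineq; rewrite ?zr.
apply/aff_dimE; have vseq_r : vseq (vset n r) = r by rewrite -zr vseq_vset_zero_set.
have -> : d.-2.+1 = d.-1 by case: d d_gt1 => [|[|d']].
rewrite -size_r; apply/eqP; rewrite eqn_leq; apply/andP; split.
  by rewrite -{2}vseq_r size_vseq rank_restrict_rows_le.
by rewrite rank_of_cert // vseq_r.
Qed.

Lemma fr_adj_of_cert s u : adjacent_cert d X s u -> fr_adj v (vset n s) (vset n u).
Proof.
case/and4P => fs fu su rsu; split; try exact: facet_of_cert.
  by rewrite eq_vset_facet.
exists (vset n [seq i <- s | i \in u]); split; first exact: ridge_of_cert.
by apply/subsetP => i; rewrite !inE mem_filter andbC.
Qed.

Lemma fr_walk_of_path s p : path (adjacent_cert d X) s p -> facet_cert d X (last s p) ->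
  fr_walk v (size p) (vset n s) (vset n (last s p)).
Proof.
move=> /(pathP s) adj_p last_p.
have lastE : last s p = nth s (s :: p) (size p) by rewrite (nth_last s (s :: p)).
rewrite lastE in last_p *.
apply: (fr_walk_of_chain (P := fun k => vset n (nth s (s :: p) k))) => [k kp|].
  exact: fr_adj_of_cert (adj_p k kp).
exact: facet_of_cert.
Qed.

(* A ridge has at least [d - 1] vertices, so facets adjacent in the facet-ridge
   graph are [adjacent] as vertex lists. *)
Lemma fr_walk_in_ball F G m W : (forall W, is_facet v W -> vseq W \in F) ->
  fr_walk v m W G -> vseq W \in iter m (grow d F) [:: vseq G].
Proof.
move=> complete; elim: m W => [|m IHm] W /=; first by case=> ->; rewrite mem_seq1.
case=> H [[facetW _ _ [Rg [ridge sub]]] walkH].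
set B := iter m (grow d F) [:: vseq G] in IHm *.
rewrite /grow mem_cat mem_filter complete // andbT.
case: (boolP (vseq W \in B)) => //= _; apply/hasP; exists (vseq H); first exact: IHm.
rewrite /adjacent count_vseq; apply: leq_trans (subset_leq_card sub).
by apply: leq_trans (aff_dim_card ridge.2); case: d d_gt1 => [|[|d']].
Qed.

Lemma facet_list_complete W : [::] \notin facet_list d X ->
  \rank (hmx v) = (d + 1)%N -> is_facet v W -> vseq W \in facet_list d X.
Proof.
move=> no_flag rk_full [[_ [a [b [ab Wab]]]] /aff_dimE].
rewrite prednK ?(ltnW d_gt1) // => rkW.
have [S SW [cardS rkS]] := restrict_rows_rank_subset W (hmx v); rewrite rkW in cardS rkS.
have t_sub : subseq (vseq S) (iota 0 (size X)) by rewrite size_X subseq_vseq.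
have size_t : size (vseq S) = d by rewrite size_vseq cardS.
have := mem_collect_subsets (step := span_step X) (out := facet_candidate d X)
  (a := ([::], ExtS 1)) t_sub size_t.
rewrite /facet_list mem_undup; set acc := foldl _ _ (vseq S); rewrite /facet_candidate.
set c := ext_normal d acc.2; rewrite span_step_indices all_rev.
case: ifP => [/andP[nz /allP orth] | _]; last first.
  by move=> /(_ [::] erefl); rewrite -mem_undup (negbTE no_flag).
have Sab i : i \in S -> dotp a (v i) = b by move/(subsetP SW)/Wab.
have Sc i : i \in S -> zdot c (zhom X i) = 0.
  by move=> iS; apply/eqP/orth; rewrite mem_vseq.
have [l key] := tight_ineq_multiple rkS Sab (zhyp_neq0 (size_ext_normal _ _) nz) Sc.
have l0 : l != 0.
  apply/eqP => l0; have WT : W = setT.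
    by apply/setP => i; rewrite in_setT; apply/Wab/eqP; rewrite -subr_eq0 key l0 mul0r.
  by move: rkW; rewrite WT restrict_rowsT rk_full addn1 => /esym/n_Sn.
have [-> ->] := face_of_scaled_ineq ab Wab l0 key.
exact.
Qed.

Lemma fr_dist_of_cert (F : seq (seq nat)) s1 s2 k :
  (forall W, is_facet v W -> vseq W \in F) -> facet_cert d X s1 -> facet_cert d X s2 ->
  (0 < k)%N -> width_cert d X F s1 s2 k -> fr_dist v (vset n s1) (vset n s2) k.
Proof.
move=> complete f1 f2 k_gt0 /and3P[far path_p /eqP last_p]; split.
  rewrite -[k in fr_walk _ k](size_traject (grow d F) [:: s2]) -size_rev.
  rewrite -(size_descent d _ s1) -{2}last_p.
  by apply: fr_walk_of_path; rewrite ?last_p.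
move=> m mk /(fr_walk_in_ball complete); rewrite !vseq_facet // => s1_ball.
by move: far; rewrite (iter_grow_mono _ s1_ball) // -ltnS prednK.
Qed.

Lemma all_vertices_of_separated F : separated d X F -> all_vertices v.
Proof.
move=> /allP sep i; set c := vertex_separator d X F i.
have sep_ij (j : 'I_n) :
    if val j == val i then zdot c (zhom X j) == 0 else Z.ltb (zdot c (zhom X j)) 0.
  have := sep i; rewrite mem_iota size_X ltn_ord => /(_ isT)/allP; apply.
  by rewrite mem_iota ltn_ord.
apply: (not_in_conv_hull_sep (a := zrow c) (b := - zR (nth 0 c d))).
  apply/eqP; rewrite -subr_eq0 opprK -zR_zdot_hom zR_eq0.
  by have := sep_ij i; rewrite eqxx.
move=> j ji; rewrite -subr_lt0 opprK -zR_zdot_hom -zR0 zR_lt.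
by have := sep_ij j; rewrite val_eqE (negbTE ji).
Qed.

Lemma prismatoid_of_cert s1 s2 : prismatoid_cert d X s1 s2 ->
  prismatoid_bases v (vset n s1) (vset n s2).
Proof.
case/and5P => f1 f2 s12 /allP cover /andP[nz /(constantP Z0)[kappa par]].
set c := facet_normal d X s1 in nz par.
split; try exact: facet_of_cert.
- by rewrite eq_vset_facet.
- by apply/setP => i; rewrite !inE; apply: cover; rewrite mem_iota size_X ltn_ord.
exists (zrow c), (- zR (nth 0 c d)), (zR kappa - zR (nth 0 c d)).
split; [|split] => [|i|i].
- move: nz => /(has_nthP 0)[j]; rewrite size_take_min => /[dup] jd.
  rewrite leq_min => /andP[{}jd _] cj; apply/eqP => /matrixP/(_ 0 (Ordinal jd)).
  by rewrite !mxE => /eqP; rewrite zR_eq0 -(nth_take _ jd) (negbTE cj).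
- case/and5P: f1 => _ /eqP zs _ _ _; rewrite inE -zs mem_zero_set => /eqP dot0.
  by apply/eqP; rewrite -subr_eq0 opprK -zR_zdot_hom dot0 zR0.
- rewrite inE => i_s2; apply/eqP; rewrite -subr_eq0 opprB addrA -zR_zdot_hom subr_eq0.
  have : zdot c (zhom X i) \in [seq zdot c (zhom X i) | i <- s2] by apply: map_f.
  by rewrite par mem_nseq => /andP[_ /eqP ->].
Qed.

Theorem prismatoid_width_of_cert s1 s2 k :
  [::] \notin facet_list d X -> separated d X (facet_list d X) ->
  prismatoid_cert d X s1 s2 -> width_cert d X (facet_list d X) s1 s2 k -> (0 < k)%N ->
  [/\ all_vertices v /\ full_dim v, prismatoid_bases v (vset n s1) (vset n s2),
      #|vset n s1| = size s1, #|vset n s2| = size s2 & fr_dist v (vset n s1) (vset n s2) k].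
Proof.
move=> no_flag sep prism width k_gt0; have /and5P[f1 f2 s12 _ _] := prism.
have full : \rank (hmx v) = (d + 1)%N.
  have [s1T | s1T] := eqVneq (vset n s1) setT.
    apply: (proper_facet_rank (ltnW d_gt1) (facet_of_cert f2)).
    by rewrite -s1T eq_sym eq_vset_facet.
  exact: (proper_facet_rank (ltnW d_gt1) (facet_of_cert f1)).
split; [split | | | |].
- exact: all_vertices_of_separated sep.
- exact: full_dim_of_rank full.
- exact: prismatoid_of_cert prism.
- by rewrite -size_vseq vseq_facet.
- by rewrite -size_vseq vseq_facet.
- apply: fr_dist_of_cert width => // W; exact: facet_list_complete.
Qed.

End IntegerPolytope.

(* The first twelve points span the base facet [x_5 = 1], the last twelve the
   base facet [x_5 = -1]. *)
Section Prismatoid24.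
Local Open Scope Z_scope.

Definition prismatoid24_points : seq (seq Z) := [::
  [:: 11; 0; 100; 0; 1]; [:: -8; 4; 86; 49; 1];
  [:: 5; -8; 51; 88; 1]; [:: 1; 10; 1; 99; 1];
  [:: -6; -8; -51; 85; 1]; [:: 8; 6; -86; 49; 1];
  [:: -10; 1; -100; 1; 1]; [:: 9; -5; -86; -49; 1];
  [:: -4; 10; -49; -88; 1]; [:: 0; -9; 1; -101; 1];
  [:: 6; 10; 49; -86; 1]; [:: -10; -5; 87; -49; 1];
  [:: 97; 26; 3; 10; -1]; [:: 70; 71; -7; -7; -1];
  [:: 24; 98; 10; 4; -1]; [:: -26; 96; -10; 3; -1];
  [:: -72; 69; 8; -8; -1]; [:: -96; 26; -4; 8; -1];
  [:: -95; -27; -3; -9; -1]; [:: -71; -72; 6; 7; -1];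
  [:: -26; -97; -10; -3; -1]; [:: 26; -95; 9; -2; -1];
  [:: 71; -71; -8; 6; -1]; [:: 97; -24; 2; -8; -1]].

End Prismatoid24.

(* A single boolean, so that the facet list is computed only once. *)
Lemma prismatoid24_certified :
  let F := facet_list 5 prismatoid24_points in
  [&& [::] \notin F, separated 5 prismatoid24_points F,
      prismatoid_cert 5 prismatoid24_points (iota 0 12) (iota 12 12)
    & width_cert 5 prismatoid24_points F (iota 0 12) (iota 12 12) 6].
Proof. by vm_compute. Qed.

Theorem mainTheorem1 :
  exists (v : 'I_24 -> 'rV[Rdefinitions.R]_5) (F1 F2 : {set 'I_24}),
    [/\ all_vertices v /\ full_dim v, prismatoid_bases v F1 F2,
        #|F1| = 12, #|F2| = 12 & fr_dist v F1 F2 6].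
Proof.
have size_X : size prismatoid24_points = 24 by [].
have shape_X : all (fun x => size x == 5) prismatoid24_points by [].
have := prismatoid24_certified; cbv zeta => /and4P[no_flag sep prism width].
have := prismatoid_width_of_cert Rdefinitions.R size_X shape_X (isT : (1 < 5)%N)
  no_flag sep prism width (isT : (0 < 6)%N).
by exists (zpoint _ 5 prismatoid24_points), (vset 24 (iota 0 12)), (vset 24 (iota 12 12)).
Qed.
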